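(* Let $B_J=L+U\in\mathbb R^{n\times n}$ with $L$ strictly lower triangular, $U$ strictly upper triangular, $L\ne O$ and $U^{(i)}_r\ne O$ for all $i=1,\dots,n-1$. Then the iteration matrix $T(\mathcal B_{FUTR})$ of the splitting $\mathcal B_{FUTR}=(U^{(n-1)}_r,U^{(n-2)}_r,\dots,U^{(1)}_r,L)$ and the backward Gauss–Seidel iteration matrix $B_{bGS}=(I-U)^{-1}L$ have the same nonzero eigenvalues.
   Context: For $i\in\{1,\dots,n-1\}$, $U^{(i)}_r$ is the $n\times n$ matrix whose $i$-th row agrees with the $i$-th row of $U$ in columns $j\ge i+1$ and which is zero elsewhere (the $i$-th row of $U$). For $B\in\mathbb R^{n\times n}$, a splitting of $B$ of order $d\ge1$ is an ordered $d$-tuple $\mathcal B=(B_1,\dots,B_d)$ of real $n\times n$ matrices with $B_p\neq O$ for all $p$, $\sum_{p=1}^d B_p=B$, and $B_p\circ B_q=O$ (Hadamard product) for $p\ne q$. The iteration matrix of $\mathcal B$ is the $dn\times dn$ matrix $T(\mathcal B)=(I_{dn}-\mathcal L)^{-1}\mathcal U$, where $\mathcal L,\mathcal U$ are $d\times d$ block matrices with $n\times n$ blocks, $\mathcal L_{ij}=B_j$ if $i>j$ and $O$ otherwise, $\mathcal U_{ij}=B_j$ if $i\le j$ and $O$ otherwise. *)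

From HB Require Import structures.
From mathcomp Require Import all_boot all_order all_algebra.
From mathcomp Require Import complex.
Set Implicit Arguments. Unset Strict Implicit. Unset Printing Implicit Defensive.
Import Order.TTheory GRing.Theory Num.Theory.
Local Open Scope ring_scope.

Section Defs.
Variable R : rcfType.

(* U^{(i)}_r, with i 1-indexed (1 <= i <= n-1): row i of U (0-indexed row
   i-1), columns j >= i+1 (1-indexed) i.e. 0-indexed column j >= i; zero
   elsewhere. *)
Definition Urow (n : nat) (U : 'M[R]_n) (i : nat) : 'M[R]_n :=
  \matrix_(k < n, j < n) (if (k.+1 == i)%N && (i <= j)%N then U k j else 0).

Definition blockL (d n : nat) (B : 'I_d -> 'M[R]_n)
  : 'M[R]_(\sum_(p < d) n, \sum_(q < d) n) :=
  \mxblock_(p < d, q < d) (if (q < p)%N then B q else 0 : 'M[R]_n).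

Definition blockU (d n : nat) (B : 'I_d -> 'M[R]_n)
  : 'M[R]_(\sum_(p < d) n, \sum_(q < d) n) :=
  \mxblock_(p < d, q < d) (if (p <= q)%N then B q else 0 : 'M[R]_n).

Definition iterT (d n : nat) (B : 'I_d -> 'M[R]_n) : 'M[R]_(\sum_(p < d) n) :=
  invmx (1%:M - blockL B) *m blockU B.

(* B_FUTR = (U^{(n-1)}_r, U^{(n-2)}_r, ..., U^{(1)}_r, L), of order n:
   position p (0-indexed) with p < n-1 holds U^{(n-1-p)}_r, position n-1 holds L *)
Definition B_FUTR (n : nat) (L U : 'M[R]_n) : 'I_n -> 'M[R]_n :=
  fun p => if (p.+1 < n)%N then Urow U (n.-1 - p) else L.

Definition B_bGS (n : nat) (L U : 'M[R]_n) : 'M[R]_n :=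
  invmx (1%:M - U) *m L.

Definition cplx_mx (m : nat) (A : 'M[R]_m) : 'M[complex R]_m :=
  map_mx (fun x : R => real_complex R x) A.

End Defs.

From HB Require Import structures.
From mathcomp Require Import all_boot all_order all_algebra.
From mathcomp Require Import complex zify.
Import Order.TTheory GRing.Theory Num.Theory.
Set Implicit Arguments. Unset Strict Implicit. Unset Printing Implicit Defensive.
Local Open Scope ring_scope.

(* For a splitting (B_0, ..., B_m) of order m+1, a nonzero a is an eigenvalue
   of T = (I - L)^{-1} U iff the block equations
     sum_(l >= i) B_l x_l + a sum_(l < i) B_l x_l = a x_i
   have a nonzero solution.  For B_FUTR the first m blocks are the rows of U,
   taken bottom-up, so B_j B_l = 0 whenever j <= l < m.  Multiplying the i-th
   equation by B_i then shows that B_i x_i = B_i x_m for every i, and the last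
   equation collapses to L z = a (I - U) z with z = x_m.  Conversely such a z
   defines a solution through the equations themselves. *)

Definition pencil_eigen (F : fieldType) n (A B : 'M[F]_n) (a : F) :=
  exists2 x : 'cV_n, x != 0 & B *m x = a *: (A *m x).

Lemma eigenvalue_trmx (F : fieldType) n (A : 'M[F]_n) a :
  eigenvalue A^T a = eigenvalue A a.
Proof.
rewrite !eigenvalue_root_char /char_poly.
suff -> : char_poly_mx A^T = (char_poly_mx A)^T by rewrite det_tr.
by apply/matrixP => i j; rewrite !mxE eq_sym.
Qed.

Lemma eigenvalue_invmx_mulP (F : fieldType) n (A B : 'M[F]_n) a :
  A \in unitmx -> reflect (pencil_eigen A B a) (eigenvalue (invmx A *m B) a).
Proof.
move=> uA; rewrite -eigenvalue_trmx.
apply: (iffP eigenvalueP) => [[v hv nzv]|[x nzx hx]].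
  exists v^T; first by rewrite trmx_eq0.
  have -> : B = A *m (invmx A *m B) by rewrite mulmxA mulmxV ?mul1mx.
  by rewrite -mulmxA -[_ *m B]trmxK -trmx_mul hv linearZ scalemxAr.
exists x^T; last by rewrite trmx_eq0.
by rewrite -trmx_mul -mulmxA hx -scalemxAr mulmxA mulVmx ?mul1mx // linearZ.
Qed.

Lemma unitmx_1_sub_lower (R : comUnitRingType) n (N : 'M[R]_n) :
  (forall i j : 'I_n, (i <= j)%N -> N i j = 0) -> (1%:M - N) \in unitmx.
Proof.
move=> N0; rewrite unitmxE det_trig.
  by rewrite big1 ?unitr1 // => i _; rewrite !mxE eqxx N0 ?subr0.
apply/is_trig_mxP => i j lt_ij; rewrite !mxE N0 1?ltnW //.
by rewrite -val_eqE (ltn_eqF lt_ij) subrr.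
Qed.

Section BlockSplitting.
Variables (F : fieldType) (d k : nat).

Definition lower_blocks (B : 'I_d -> 'M[F]_k) :=
  \mxblock_(p < d, q < d) (if (q < p)%N then B q else 0 : 'M[F]_k).

Definition upper_blocks (B : 'I_d -> 'M[F]_k) :=
  \mxblock_(p < d, q < d) (if (p <= q)%N then B q else 0 : 'M[F]_k).

Lemma unitmx_1_sub_lower_blocks B : (1%:M - lower_blocks B) \in unitmx.
Proof.
apply: unitmx_1_sub_lower => s t le_st; rewrite mxE.
have : (tagnat.sig1 s <= tagnat.sig1 t)%N by exact: tagnat.le_sig1.
by rewrite leqNgt => /negbTE ->; rewrite mxE.
Qed.

Lemma scale_mxcol n a (C : 'I_d -> 'M[F]_(k, n)) :
  a *: \mxcol_i C i = \mxcol_i (a *: C i).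
Proof. by apply/matrixP => i j; rewrite !mxE. Qed.

End BlockSplitting.

Section CollapsingSplitting.
Variables (F : fieldType) (m k : nat) (B : 'I_m.+1 -> 'M[F]_k).
Hypothesis mulB0 : forall j l : 'I_m.+1, (j <= l)%N -> (l < m)%N -> B j *m B l = 0.

Definition block_weight (a : F) (i l : 'I_m.+1) : F := if (i <= l)%N then 1 else a.

Definition head_sum := \sum_(l < m.+1 | (l < m)%N) B l.

Lemma mul_blocksE a (x : 'cV[F]_(\sum_(p < m.+1) k)) :
  upper_blocks B *m x + a *: (lower_blocks B *m x) =
  \mxcol_i \sum_l block_weight a i l *: (B l *m submxcol x l).
Proof.
rewrite -{1 2}(submxcolK x) !mul_mxblock_mxrow scale_mxcol -mxcolD.
apply: eq_mxcol => i; rewrite scaler_sumr -big_split.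
apply: eq_bigr => l _ /=; rewrite /block_weight.
by case: leqP => _; rewrite mul0mx ?scaler0 ?addr0 ?add0r ?scale1r.
Qed.

Lemma block_weight_mulB a j l :
  block_weight a j l *: (B j *m B l) = block_weight a ord_max l *: (B j *m B l).
Proof.
rewrite /block_weight; case: (ltnP j m) => [lt_jm|le_mj]; last first.
  by have -> : j = ord_max by apply/val_inj/eqP; rewrite eqn_leq -ltnS ltn_ord.
case: (leqP j l) => [le_jl|lt_lj]; last by rewrite leqNgt (ltn_trans lt_lj).
by case: (ltnP l m) => // lt_lm; rewrite mulB0 // !scaler0.
Qed.

Lemma last_row_sumE a (w : 'cV[F]_k) :
  \sum_l block_weight a ord_max l *: (B l *m w) = B ord_max *m w + a *: (head_sum *m w).
Proof.
rewrite (bigD1 ord_max) //= /block_weight leqnn scale1r; congr (_ + _).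
rewrite /head_sum mulmx_suml scaler_sumr; apply: eq_big => l.
  by rewrite -val_eqE /= ltn_neqAle leq_ord andbT.
move=> ne_l; rewrite -val_eqE in ne_l.
by rewrite leqNgt ltn_neqAle -ltnS ltn_ord andbT ne_l.
Qed.

Lemma block_solution_collapse a (x : 'I_m.+1 -> 'cV[F]_k) : a != 0 ->
  (forall i, \sum_l block_weight a i l *: (B l *m x l) = a *: x i) ->
  (exists i, x i != 0) -> pencil_eigen (1%:M - head_sum) (B ord_max) a.
Proof.
move=> nz_a Ex [i0 nz_xi0].
have Bx_last j : B j *m x j = B j *m x ord_max.
  apply: (scalerI nz_a); rewrite !scalemxAr -!Ex !mulmx_sumr.
  apply: eq_bigr => l _; rewrite -!scalemxAr !mulmxA.
  by rewrite [LHS]scalemxAl [RHS]scalemxAl block_weight_mulB.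
have Ex_last i : \sum_l block_weight a i l *: (B l *m x ord_max) = a *: x i.
  by rewrite -Ex; apply: eq_bigr => l _; rewrite Bx_last.
exists (x ord_max).
  apply: contraNneq nz_xi0 => x_last0; have := Ex_last i0.
  rewrite x_last0 big1 => [/esym/eqP|l _]; last by rewrite mulmx0 scaler0.
  by rewrite scaler_eq0 (negbTE nz_a).
have := Ex_last ord_max; rewrite last_row_sumE => E.
by rewrite mulmxBl mul1mx scalerBr -E addrK.
Qed.

Lemma block_solution_lift a (z : 'cV[F]_k) : a != 0 -> z != 0 ->
  B ord_max *m z = a *: ((1%:M - head_sum) *m z) ->
  exists2 x : 'I_m.+1 -> 'cV[F]_k,
    forall i, \sum_l block_weight a i l *: (B l *m x l) = a *: x i & x ord_max != 0.
Proof.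
move=> nz_a nz_z Ez.
have Ez_last : \sum_l block_weight a ord_max l *: (B l *m z) = a *: z.
  by rewrite last_row_sumE Ez mulmxBl mul1mx scalerBr subrK.
pose x i := a^-1 *: \sum_l block_weight a i l *: (B l *m z).
have Bx j : B j *m x j = B j *m z.
  apply: (scalerI nz_a); rewrite !scalemxAr /x scalerA mulfV // scale1r -Ez_last.
  rewrite !mulmx_sumr; apply: eq_bigr => l _; rewrite -!scalemxAr !mulmxA.
  by rewrite [LHS]scalemxAl [RHS]scalemxAl block_weight_mulB.
exists x => [i|]; last by rewrite /x Ez_last scalerA mulVf // scale1r.
by rewrite /x scalerA mulfV // scale1r; apply: eq_bigr => l _; rewrite Bx.
Qed.

Lemma pencil_eigen_blocksE a : a != 0 ->
  pencil_eigen (1%:M - lower_blocks B) (upper_blocks B) a <->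
  pencil_eigen (1%:M - head_sum) (B ord_max) a.
Proof.
have pencilE n (A C : 'M[F]_n) (v : 'cV_n) :
    (C *m v = a *: ((1%:M - A) *m v)) <-> (C *m v + a *: (A *m v) = a *: v).
  rewrite mulmxBl mul1mx scalerBr.
  by split => [->|<-]; rewrite ?subrK ?addrK.
move=> nz_a; split => [[x nz_x /pencilE Ex]|[z nz_z Ez]].
  apply: (@block_solution_collapse a (submxcol x)) => //.
    by move: Ex; rewrite mul_blocksE -{2}(submxcolK x) scale_mxcol => /eq_mxcolP.
  case: (pickP (fun i => submxcol x i != 0)) => [i nz_xi|x0]; first by exists i.
  case/eqP: nz_x; rewrite -(submxcolK x) -mxcol0; apply: eq_mxcol => i.
  exact/eqP/negbFE/x0.
have [x Ex nz_x] := block_solution_lift nz_a nz_z Ez.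
exists (\mxcol_i x i).
  by apply: contraNneq nz_x => x0; rewrite -(mxcolK x ord_max) x0 submxcol0.
apply/pencilE; rewrite mul_blocksE scale_mxcol; apply: eq_mxcol => i.
by rewrite -Ex; apply: eq_bigr => l _; rewrite mxcolK.
Qed.

End CollapsingSplitting.

Section TriangularSplitting.
Variable R : rcfType.

Lemma cplx_iterT d n (B : 'I_d -> 'M[R]_n) :
  cplx_mx (iterT B) =
  invmx (1%:M - lower_blocks (fun p => cplx_mx (B p))) *m
  upper_blocks (fun p => cplx_mx (B p)).
Proof.
rewrite /cplx_mx /iterT map_mxM map_invmx map_mxB map_scalar_mx rmorph1.
congr (invmx (_ - _) *m _); apply/matrixP => i j; rewrite !mxE;
  by case: ifP => _; rewrite !mxE.
Qed.

Lemma cplx_bGS n (L U : 'M[R]_n) :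
  cplx_mx (B_bGS L U) = invmx (1%:M - cplx_mx U) *m cplx_mx L.
Proof. by rewrite /cplx_mx /B_bGS map_mxM map_invmx map_mxB map_scalar_mx rmorph1. Qed.

Lemma Urow_mul0 n (U : 'M[R]_n) a b : (b <= a)%N -> Urow U a *m Urow U b = 0.
Proof.
move=> le_ba; apply/matrixP => r c; rewrite !mxE big1 // => s _; rewrite !mxE.
case: andP => [[_ le_as]|_]; last by rewrite mul0r.
case: andP => [[/eqP sb _]|_]; last by rewrite mulr0.
by move: le_ba le_as; rewrite -sb; lia.
Qed.

Lemma sum_Urow m (U : 'M[R]_m.+1) :
  (forall i j : 'I_m.+1, (j <= i)%N -> U i j = 0) ->
  \sum_(l < m.+1 | (l < m)%N) Urow U (m - l) = U.
Proof.
move=> U0; apply/matrixP => r c; rewrite summxE.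
under eq_bigr do rewrite mxE.
case: (leqP c r) => [le_cr|lt_rc].
  rewrite U0 // big1 // => l _; case: andP => [[/eqP rl le_lc]|//].
  by move: le_cr le_lc; rewrite -rl; lia.
have lt_r1 : (m - r.+1 < m.+1)%N by lia.
rewrite (bigD1 (Ordinal lt_r1)) /=; last by move: (ltn_ord c) lt_rc; lia.
rewrite big1 ?addr0.
  by rewrite ifT //; apply/andP; split; [apply/eqP|]; move: (ltn_ord c) lt_rc; lia.
move=> l /andP[lt_lm ne_l]; case: andP => [[/eqP rl _]|//].
by move: ne_l; rewrite -val_eqE /=; move: rl lt_lm; lia.
Qed.

End TriangularSplitting.

Theorem theorem6p3 (R : rcfType) (n : nat) (L U : 'M[R]_n)
  (hL : forall i j : 'I_n, (i <= j)%N -> L i j = 0)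
  (hU : forall i j : 'I_n, (j <= i)%N -> U i j = 0)
  (hL0 : L != 0)
  (hUr : forall i : nat, (1 <= i <= n.-1)%N -> Urow U i != 0) :
  forall lam : complex R, lam != 0 ->
    eigenvalue (cplx_mx (iterT (B_FUTR L U))) lam =
    eigenvalue (cplx_mx (B_bGS L U)) lam.
Proof.
case: n L U hL hU hL0 hUr => [|m] L U _ hU hL0 _; first by rewrite thinmx0 eqxx in hL0.
move=> lam nz_lam; pose B p := cplx_mx (B_FUTR L U p).
have mulB0 (j l : 'I_m.+1) : (j <= l)%N -> (l < m)%N -> B j *m B l = 0.
  by move=> le_jl lt_lm; rewrite /B /cplx_mx -map_mxM /B_FUTR !ifT ?Urow_mul0 ?map_mx0 //=; lia.
have B_last : B ord_max = cplx_mx L by rewrite /B /B_FUTR /= ltnn.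
have B_head : head_sum B = cplx_mx U.
  rewrite /head_sum -[in RHS](sum_Urow hU); apply/matrixP => r c.
  rewrite summxE mxE summxE rmorph_sum; apply: eq_bigr => l lt_lm.
  by rewrite /B /B_FUTR ifT ?mxE //; move: lt_lm; lia.
have unit_U : (1%:M - cplx_mx U) \in unitmx.
  rewrite -unitmx_tr linearB /= trmx1; apply: unitmx_1_sub_lower => i j le_ij.
  by rewrite !mxE hU ?rmorph0.
have E := pencil_eigen_blocksE mulB0 nz_lam; rewrite B_last B_head in E.
rewrite cplx_iterT cplx_bGS.
by apply/(eigenvalue_invmx_mulP _ _ (unitmx_1_sub_lower_blocks _))/
  (eigenvalue_invmx_mulP _ _ unit_U); [exact: E.1 | exact: E.2].
Qed.
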